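(* Assume $t_m=1$ and let $d_\beta^*(1)=(t_1t_2\cdots t_{m-1}0)^\omega$. Let $y\in\mathbb Z_\beta^+$ have β-expansion $y_ny_{n-1}\cdots y_0\bullet$, and let $k$ be the maximal index (with $0\le k\le n+1$) such that the word $y_{k-1}y_{k-2}\cdots y_0$ is a prefix of $d_\beta^*(1)$ (the empty word when $k=0$). Then ${\rm succ}(y)=y+T_\beta^{k'}(1)$, where $k'\in\{0,1,\dots,m-1\}$ satisfies $k'\equiv k\pmod m$.
   Context: $\beta>1$ is a simple Parry number with $d_\beta(1)=t_1\cdots t_{m-1}t_m$ ($m\ge2$, $t_1\ge1$, $t_m\ge1$, satisfying the Parry condition). The β-expansion of $x>0$ is the greedy expansion $x=\sum_{i\le k}x_i\beta^i$; we write $x=x_n\cdots x_0\bullet$ when $x_i=0$ for $i<0$, and such $x$ (together with $0$) form $\mathbb Z_\beta^+$. A finite string $x_k\cdots x_0$ over $\{0,\dots,\lceil\beta\rceil-1\}$ is the β-expansion of a β-integer iff each suffix $x_i\cdots x_0$ is lexicographically strictly smaller than $d_\beta(1)$. $\mathbb Z_\beta=\mathbb Z_\beta^+\cup(-\mathbb Z_\beta^+)$, ${\rm succ}(x)=\min\{y\in\mathbb Z_\beta: y>x\}$. $T_\beta(x)=\beta x\bmod1$ and $T_\beta^i(1)=\sum_{j=i+1}^m t_j\beta^{i-j}$ for $0\le i\le m-1$. *)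

From Stdlib Require Import Reals Lra Lia ZArith.
Open Scope R_scope.

Definition Tb (beta x : R) : R := beta * x - IZR (Int_part (beta * x)).

(* d_beta(1) = t_1 ... t_m (Renyi expansion of 1, finite of length m):
   t_i = floor(beta * T^{i-1}(1)) for 1 <= i <= m, and T^m(1) = 0. *)
Definition renyi_one (beta : R) (m : nat) (t : nat -> nat) : Prop :=
  (forall i : nat, (1 <= i <= m)%nat ->
     Z.of_nat (t i) = Int_part (beta * Nat.iter (i - 1) (Tb beta) 1)) /\
  Nat.iter m (Tb beta) 1 = 0.

(* [beta_int_expansion beta x L ys]: x >= 0 has greedy beta-expansion
   ys_(L-1) ... ys_0 . (no digits at negative indices, no leading zeros;
   L = 0 is the empty expansion of x = 0).  For x > 0 with
   beta^(L-1) <= x < beta^L, the greedy digits are the Renyi digits of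
   z = x / beta^L, and x is a beta-integer iff T^L(z) = 0. *)
Definition beta_int_expansion (beta x : R) (L : nat) (ys : nat -> nat) : Prop :=
  (L = 0%nat /\ x = 0) \/
  ((0 < L)%nat /\ beta ^ (L - 1) <= x < beta ^ L /\
   (forall i : nat, (i < L)%nat ->
      Z.of_nat (ys i) = Int_part (beta * Nat.iter (L - 1 - i) (Tb beta) (x / beta ^ L))) /\
   Nat.iter L (Tb beta) (x / beta ^ L) = 0).

Definition in_Zbeta_plus (beta x : R) : Prop :=
  exists (L : nat) (ys : nat -> nat), beta_int_expansion beta x L ys.

Definition in_Zbeta (beta x : R) : Prop :=
  in_Zbeta_plus beta x \/ in_Zbeta_plus beta (- x).

Definition is_succ (beta x s : R) : Prop :=
  in_Zbeta beta s /\ x < s /\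
  (forall z : R, in_Zbeta beta z -> x < z -> s <= z).

(* d_beta^*(1) = (t_1 ... t_(m-1) 0)^omega, indexed from 1. *)
Definition dstar (m : nat) (t : nat -> nat) (j : nat) : nat :=
  if (Nat.modulo j m =? 0)%nat then 0%nat else t (Nat.modulo j m).

Definition suffix_is_dstar_prefix (m : nat) (t : nat -> nat) (ys : nat -> nat) (k : nat) : Prop :=
  forall j : nat, (1 <= j <= k)%nat -> ys (k - j)%nat = dstar m t j.

From Stdlib Require Import Reals Lra Lia ZArith Classical.
Open Scope R_scope.

(* Let [Y_i] be the beta-integer [y_(L-1) ... y_i], so [Y_i = beta Y_(i+1) + y_i].
   Going down from [Y_L = 0], the gap after [Y_i] to the next beta-integer is
   [T^(K_i mod m)(1)], where [K_i] is the length of the longest suffix of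
   [y_(L-1) ... y_i] that is a prefix of [d*(1)].  If [y_i] is the next letter of
   [d*(1)], the gap [T^j(1)] becomes [beta T^j(1) - y_i = T^(j+1)(1)], and
   [t_m = 1] gives [beta T^(m-1)(1) = 1 = T^0(1)] at the end of a period.  If [y_i]
   is smaller, the gap becomes [1] and, because every shift of [d*(1)] is
   lexicographically below [d*(1)], no suffix ending at [y_i] matches any more. *)

Lemma Rdiv_nonneg x d : 0 <= x -> 0 < d -> 0 <= x / d.
Proof. intros Hx Hd. apply Rle_mult_inv_pos; assumption. Qed.

Lemma Rdiv_lt_of_lt_mul x c d : 0 < d -> x < c * d -> x / d < c.
Proof.
  intros Hd Hx. apply (Rmult_lt_reg_r d); [exact Hd|].
  unfold Rdiv. rewrite Rmult_assoc, Rinv_l; lra.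
Qed.

Lemma Int_part_nonneg r : 0 <= r -> (0 <= Int_part r)%Z.
Proof.
  intros Hr. destruct (base_Int_part r) as [_ Hlt].
  assert (H : IZR (Int_part r) > -1) by lra.
  apply lt_IZR in H. lia.
Qed.

Lemma Int_part_le r s : r <= s -> (Int_part r <= Int_part s)%Z.
Proof.
  intros Hrs. destruct (base_Int_part r) as [Hr _]. destruct (base_Int_part s) as [_ Hs].
  apply Z.lt_succ_r, lt_IZR. rewrite succ_IZR. lra.
Qed.

Lemma Tb_range b x : 0 <= Tb b x < 1.
Proof. unfold Tb. destruct (base_Int_part (b * x)). lra. Qed.

Lemma Tb_unique b x n s : b * x = IZR n + s -> 0 <= s < 1 -> Tb b x = s.
Proof.
  intros Hx Hs. unfold Tb. rewrite <- (Int_part_spec (b * x) n); lra.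
Qed.

Lemma Tb_id b x : 0 <= b * x < 1 -> Tb b x = b * x.
Proof. intros Hx. apply (Tb_unique b x 0); simpl; lra. Qed.

Lemma Tb_0 b : Tb b 0 = 0.
Proof. apply (Tb_unique b 0 0); simpl; lra. Qed.

Lemma Tb_le b x : 0 <= b * x -> Tb b x <= b * x.
Proof.
  intros Hx. unfold Tb. pose proof (IZR_le _ _ (Int_part_nonneg _ Hx)). lra.
Qed.

Lemma iter_Tb_0 b n : Nat.iter n (Tb b) 0 = 0.
Proof. induction n as [|n IH]; simpl; [reflexivity|]. rewrite IH. apply Tb_0. Qed.

(* [bfrac b x] is the fractional part of the greedy beta-expansion of [x >= 0]:
   [x - bfrac b x] is [x] with its digits at negative positions removed.  It may
   be computed from any [N] with [x < b ^ N] (see [bfrac_at_indep]). *)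
Definition bfrac_at b N x := Nat.iter N (Tb b) (x / b ^ N).

Definition pow_index b x := Z.to_nat (up (x / (b - 1))).

Definition bfrac b x := bfrac_at b (pow_index b x) x.

Section BetaFractionalPart.

Variable b : R.
Hypothesis Hb : 1 < b.

Lemma pow_b_pos n : 0 < b ^ n.
Proof. apply pow_lt; lra. Qed.

Lemma lt_pow_index x : x < b ^ pow_index b x.
Proof.
  set (N := pow_index b x).
  assert (HN : x / (b - 1) < INR N).
  { destruct (archimed (x / (b - 1))) as [Hup _].
    assert (IZR (up (x / (b - 1))) <= INR N); [|lra].
    destruct (Z_le_gt_dec 0 (up (x / (b - 1)))).
    - unfold N, pow_index. rewrite INR_IZR_INZ, Z2Nat.id by lia. lra.
    - pose proof (pos_INR N). assert (IZR (up (x / (b - 1))) <= 0) by (apply IZR_le; lia).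
      lra. }
  pose proof (poly N (b - 1) ltac:(lra)) as Hpoly.
  replace (1 + (b - 1)) with b in Hpoly by ring.
  assert (x = x / (b - 1) * (b - 1)) by (field; lra).
  nra.
Qed.

Lemma bfrac_at_S N x : 0 <= x < b ^ N -> bfrac_at b (S N) x = bfrac_at b N x.
Proof.
  intros Hx. pose proof (pow_b_pos N).
  unfold bfrac_at. rewrite Nat.iter_succ_r. f_equal.
  rewrite Tb_id; simpl.
  - field. split; lra.
  - replace (b * (x / (b * b ^ N))) with (x / b ^ N) by (field; split; lra).
    split; [apply Rdiv_nonneg | apply Rdiv_lt_of_lt_mul]; lra.
Qed.

Lemma bfrac_at_add d N x : 0 <= x < b ^ N -> bfrac_at b (d + N) x = bfrac_at b N x.
Proof.
  intros Hx. induction d as [|d IH]; [reflexivity|].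
  simpl plus. rewrite bfrac_at_S, IH; [reflexivity|].
  split; [lra|]. apply Rlt_le_trans with (b ^ N); [lra|].
  apply Rle_pow; [lra | lia].
Qed.

Lemma bfrac_at_indep N x : 0 <= x < b ^ N -> bfrac b x = bfrac_at b N x.
Proof.
  intros Hx. unfold bfrac.
  assert (Hx' : 0 <= x < b ^ pow_index b x) by (split; [lra | apply lt_pow_index]).
  rewrite <- (bfrac_at_add (N - pow_index b x) _ _ Hx').
  rewrite <- (bfrac_at_add (pow_index b x - N) _ _ Hx).
  f_equal. lia.
Qed.

Lemma bfrac_small x : 0 <= x < 1 -> bfrac b x = x.
Proof.
  intros Hx. rewrite (bfrac_at_indep 0) by (simpl; lra).
  unfold bfrac_at. simpl. apply Rdiv_1_r.
Qed.

Lemma bfrac_div x : 0 <= x -> bfrac b x = Tb b (bfrac b (x / b)).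
Proof.
  intros Hx. set (N := pow_index b (x / b)).
  assert (HN : x / b < b ^ N) by apply lt_pow_index.
  pose proof (pow_b_pos N).
  rewrite (bfrac_at_indep (S N) x), (bfrac_at_indep N (x / b)).
  - unfold bfrac_at. rewrite Nat.iter_succ. f_equal. f_equal. simpl. field. split; lra.
  - split; [apply Rdiv_nonneg|]; lra.
  - split; [exact Hx|]. simpl.
    replace x with (x / b * b) by (field; lra). nra.
Qed.

Lemma bfrac_range x : 0 <= x -> 0 <= bfrac b x < 1.
Proof. intros Hx. rewrite bfrac_div by exact Hx. apply Tb_range. Qed.

Lemma nonneg_ind_div (P : R -> Prop) :
  (forall x, 0 <= x < 1 -> P x) ->
  (forall x, 1 <= x -> P (x / b) -> P x) ->
  forall x, 0 <= x -> P x.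
Proof.
  intros Hsmall Hdiv.
  assert (H : forall N x, 0 <= x < b ^ N -> P x).
  { induction N as [|N IH]; intros x Hx; simpl in Hx.
    - apply Hsmall. lra.
    - destruct (Rlt_le_dec x 1); [apply Hsmall; lra|].
      apply Hdiv; [assumption|]. apply IH.
      split; [apply Rdiv_nonneg | apply Rdiv_lt_of_lt_mul]; lra. }
  intros x Hx. apply (H (pow_index b x)). split; [exact Hx | apply lt_pow_index].
Qed.

Lemma bfrac_le x : 0 <= x -> bfrac b x <= x.
Proof.
  revert x. apply nonneg_ind_div.
  - intros x Hx. rewrite bfrac_small; lra.
  - intros x Hx IH. rewrite bfrac_div by lra.
    assert (Hxb : 0 <= x / b) by (apply Rdiv_nonneg; lra).
    pose proof (bfrac_range _ Hxb).
    eapply Rle_trans; [apply Tb_le; nra|].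
    replace x with (b * (x / b)) at 2 by (field; lra). nra.
Qed.

Lemma bfrac_sub x e : 0 <= x -> 0 <= e <= bfrac b x -> bfrac b (x - e) = bfrac b x - e.
Proof.
  intros Hx. revert e. revert x Hx.
  apply (nonneg_ind_div (fun x => forall e, 0 <= e <= bfrac b x -> bfrac b (x - e) = bfrac b x - e)).
  - intros x Hx e He. rewrite bfrac_small in He by exact Hx.
    rewrite !bfrac_small; lra.
  - intros x Hx IH e He.
    assert (Hxb : 0 <= x / b) by (apply Rdiv_nonneg; lra).
    pose proof (bfrac_range _ Hxb) as Hu.
    set (u := bfrac b (x / b)) in *.
    assert (Hfx : bfrac b x = Tb b u) by (apply bfrac_div; lra).
    pose proof (IZR_le _ _ (Int_part_nonneg (b * u) ltac:(nra))).
    assert (IH' : bfrac b (x / b - e / b) = u - e / b).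
    { apply IH. split; [apply Rdiv_nonneg; lra|].
      apply (Rmult_le_reg_l b); [lra|].
      replace (b * (e / b)) with e by (field; lra).
      rewrite Hfx in He. pose proof (Tb_le b u). unfold Tb in *. lra. }
    rewrite bfrac_div by (pose proof (bfrac_le x ltac:(lra)); lra).
    replace ((x - e) / b) with (x / b - e / b) by (field; lra).
    rewrite IH', Hfx. apply (Tb_unique b _ (Int_part (b * u))).
    + replace (b * (u - e / b)) with (b * u - e) by (field; lra). unfold Tb. lra.
    + rewrite Hfx in He. pose proof (Tb_range b u). unfold Tb in *. lra.
Qed.

End BetaFractionalPart.

Notation orbit1 b j := (Nat.iter j (Tb b) 1).

Lemma orbit1_range b j : (1 <= j)%nat -> 0 <= orbit1 b j < 1.
Proof. intros Hj. destruct j as [|j]; [lia|]. apply Tb_range. Qed.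

Lemma greedy_digit_le b J u v : 0 < b -> u <= v ->
  (forall l, (l < J)%nat ->
     Int_part (b * Nat.iter l (Tb b) u) = Int_part (b * Nat.iter l (Tb b) v)) ->
  (Int_part (b * Nat.iter J (Tb b) u) <= Int_part (b * Nat.iter J (Tb b) v))%Z.
Proof.
  intros Hb Huv Hdig. apply Int_part_le, Rmult_le_compat_l; [lra|].
  induction J as [|J IH]; [exact Huv|].
  rewrite !Nat.iter_succ. unfold Tb at 1 3. rewrite (Hdig J) by lia.
  assert (Nat.iter J (Tb b) u <= Nat.iter J (Tb b) v) by (apply IH; intros; apply Hdig; lia).
  nra.
Qed.

Definition shifts_lex_le (w : nat -> nat) : Prop :=
  forall n i, (1 <= n)%nat ->
  (forall l, (1 <= l <= i)%nat -> w (n + l)%nat = w l) ->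
  (w (n + S i) <= w (S i))%nat.

Lemma dstar_add_mod m t n x : dstar m t (n + x) = dstar m t (n mod m + x).
Proof. unfold dstar. rewrite Nat.Div0.add_mod_idemp_l. reflexivity. Qed.

Lemma dstar_lt m t j : (1 <= j < m)%nat -> dstar m t j = t j.
Proof.
  intros Hj. unfold dstar. rewrite Nat.mod_small by lia.
  destruct (Nat.eqb_spec j 0); [lia | reflexivity].
Qed.

Lemma dstar_m m t : dstar m t m = 0%nat.
Proof. unfold dstar. rewrite Nat.Div0.mod_same. reflexivity. Qed.


Section LongestMatch.

Variable w : nat -> nat.

Definition prefix_match (u : nat -> nat) (K : nat) : Prop :=
  forall l, (1 <= l <= K)%nat -> u (K - l)%nat = w l.

Definition longest_match (u : nat -> nat) (B K : nat) : Prop :=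
  (K <= B)%nat /\ prefix_match u K /\
  forall K2, (K2 <= B)%nat -> prefix_match u K2 -> (K2 <= K)%nat.

Variables u v : nat -> nat.
Hypothesis Hv : forall n, v n = u (S n).

Lemma prefix_match_S K : prefix_match u (S K) <-> u 0%nat = w (S K) /\ prefix_match v K.
Proof.
  split.
  - intros Hu. split.
    + rewrite <- (Hu (S K)) by lia. f_equal. lia.
    + intros l Hl. rewrite Hv, <- (Hu l) by lia. f_equal. lia.
  - intros [H0 Hvm] l Hl. destruct (Nat.eq_dec l (S K)) as [->|Hne].
    + rewrite Nat.sub_diag. exact H0.
    + rewrite <- (Hvm l), Hv by lia. f_equal. lia.
Qed.

Lemma longest_match_exists B : exists K, longest_match u B K.
Proof.
  induction B as [|B [K [HKB [HK Hmax]]]].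
  - exists 0%nat. repeat split; [lia | intros l Hl; lia | intros K2 HK2 _; exact HK2].
  - destruct (classic (prefix_match u (S B))) as [HS|HS].
    + exists (S B). repeat split; [lia | exact HS | intros K2 HK2 _; exact HK2].
    + exists K. repeat split; [lia | exact HK|].
      intros K2 HK2 HmK2. destruct (Nat.eq_dec K2 (S B)) as [->|Hne]; [contradiction|].
      apply Hmax; [lia | exact HmK2].
Qed.

Lemma longest_match_unique B K K' : longest_match u B K -> longest_match u B K' -> K = K'.
Proof.
  intros [HK [Hm Hmax]] [HK' [Hm' Hmax']].
  apply Nat.le_antisymm; [apply Hmax' | apply Hmax]; assumption.
Qed.

Lemma longest_match_extend B K :
  longest_match v B K -> u 0%nat = w (S K) -> longest_match u (S B) (S K).
Proof.
  intros [HKB [HK Hmax]] H0. repeat split.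
  - lia.
  - apply prefix_match_S. split; assumption.
  - intros [|K2] HK2 HmK2; [lia|].
    apply prefix_match_S in HmK2 as [_ HmK2].
    specialize (Hmax K2 ltac:(lia) HmK2). lia.
Qed.

Hypothesis Hw : shifts_lex_le w.

Lemma longest_match_reset B K :
  longest_match v B K -> (u 0%nat < w (S K))%nat -> longest_match u (S B) 0.
Proof.
  intros [HKB [HK Hmax]] Hlt. repeat split.
  - lia.
  - intros l Hl. lia.
  - intros [|K2] HK2 HmK2; [lia|]. exfalso.
    apply prefix_match_S in HmK2 as [H0 HmK2].
    specialize (Hmax K2 ltac:(lia) HmK2).
    destruct (Nat.eq_dec K2 K) as [->|Hne]; [lia|].
    assert (Hshift : forall l, (1 <= l <= K2)%nat -> w (K - K2 + l)%nat = w l).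
    { intros l Hl. rewrite <- (HK (K - K2 + l)%nat), <- (HmK2 l) by lia. f_equal. lia. }
    pose proof (Hw (K - K2)%nat K2 ltac:(lia) Hshift) as Hle.
    replace (K - K2 + S K2)%nat with (S K) in Hle by lia. lia.
Qed.

End LongestMatch.

(* For [Y >= 0] and [g > 0] this says that [Y] is a beta-integer whose successor is
   [Y + g]: the fractional part grows like [s] on [Y + s], [0 <= s < g]. *)
Definition gap_after b Y g : Prop :=
  (forall s, 0 <= s < g -> bfrac b (Y + s) = s) /\ bfrac b (Y + g) = 0.

Lemma Tb_nat_div b a s : 0 < b -> 0 <= s < 1 -> Tb b ((INR a + s) / b) = s.
Proof.
  intros Hb Hs. apply (Tb_unique b _ (Z.of_nat a)); [rewrite <- INR_IZR_INZ; field|]; lra.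
Qed.

Section Gaps.

Variable b : R.
Hypothesis Hb : 1 < b.

Lemma gap_after_0_1 : gap_after b 0 1.
Proof.
  split.
  - intros s Hs. rewrite Rplus_0_l. apply bfrac_small; lra.
  - assert (Hinv : 0 <= 1 / b < 1).
    { split; [apply Rdiv_nonneg | apply Rdiv_lt_of_lt_mul]; lra. }
    rewrite Rplus_0_l, bfrac_div, bfrac_small by lra.
    apply (Tb_unique b _ 1); simpl; [field|]; lra.
Qed.

Variables (Y g : R) (a : nat).
Hypotheses (HY : 0 <= Y) (Hgap : gap_after b Y g).

Lemma bfrac_scale s : 0 <= s ->
  bfrac b (b * Y + INR a + s) = Tb b (bfrac b (Y + (INR a + s) / b)).
Proof.
  intros Hs. pose proof (pos_INR a).
  rewrite bfrac_div by nra. do 2 f_equal. field. lra.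
Qed.

Lemma bfrac_scale_lt s : 0 <= s -> INR a + s < b * g ->
  bfrac b (b * Y + INR a + s) = Tb b ((INR a + s) / b).
Proof.
  intros Hs Hlt. pose proof (pos_INR a).
  rewrite bfrac_scale by exact Hs. f_equal. apply (proj1 Hgap).
  split; [apply Rdiv_nonneg; lra | apply Rdiv_lt_of_lt_mul; [lra | rewrite Rmult_comm; lra]].
Qed.

Lemma bfrac_scale_eq s : 0 <= s -> INR a + s = b * g -> bfrac b (b * Y + INR a + s) = 0.
Proof.
  intros Hs Heq. rewrite bfrac_scale by exact Hs.
  replace ((INR a + s) / b) with g by (rewrite Heq; field; lra).
  rewrite (proj2 Hgap). apply Tb_0.
Qed.

Lemma gap_after_scale_fraction g' :
  b * g = INR a + g' -> 0 < g' < 1 -> gap_after b (b * Y + INR a) g'.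
Proof.
  intros Hrel Hg'. split.
  - intros s Hs. rewrite bfrac_scale_lt by lra. apply Tb_nat_div; lra.
  - apply bfrac_scale_eq; lra.
Qed.

Lemma gap_after_scale_one : INR a + 1 <= b * g -> gap_after b (b * Y + INR a) 1.
Proof.
  intros Hle. split.
  - intros s Hs. rewrite bfrac_scale_lt by lra. apply Tb_nat_div; lra.
  - destruct (Rle_lt_or_eq_dec _ _ Hle) as [Hlt|Heq]; [|apply bfrac_scale_eq; lra].
    rewrite bfrac_scale_lt by lra.
    replace (INR a + 1) with (INR (S a) + 0) by (rewrite S_INR; ring).
    apply Tb_nat_div; lra.
Qed.

End Gaps.

Section BetaIntegers.

Variable b : R.
Hypothesis Hb : 1 < b.

Lemma pow_bracket x : 1 <= x -> exists L, (0 < L)%nat /\ b ^ (L - 1) <= x < b ^ L.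
Proof.
  intros Hx. pose proof (lt_pow_index b Hb x) as Hlt. revert Hlt.
  generalize (pow_index b x) as N. induction N as [|N IH]; intros HN; [simpl in HN; lra|].
  destruct (Rlt_le_dec x (b ^ N)) as [Hlt|Hge]; [exact (IH Hlt)|].
  exists (S N). split; [lia|]. rewrite Nat.sub_1_r. split; assumption.
Qed.

Lemma in_Zbeta_plus_of_bfrac x : 0 <= x -> bfrac b x = 0 -> in_Zbeta_plus b x.
Proof.
  intros Hx Hfrac. destruct (Req_dec x 0) as [->|Hx0].
  { exists 0%nat, (fun _ => 0%nat). left. split; reflexivity. }
  assert (Hx1 : 1 <= x).
  { destruct (Rlt_le_dec x 1) as [Hlt|]; [|assumption].
    rewrite bfrac_small in Hfrac by lra. lra. }
  destruct (pow_bracket x Hx1) as [L [HL HxL]].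
  exists L, (fun i => Z.to_nat (Int_part (b * Nat.iter (L - 1 - i) (Tb b) (x / b ^ L)))).
  right. split; [exact HL|]. split; [exact HxL|]. split.
  - intros i Hi. rewrite Z2Nat.id; [reflexivity|]. apply Int_part_nonneg.
    assert (0 <= Nat.iter (L - 1 - i) (Tb b) (x / b ^ L)); [|nra].
    destruct (L - 1 - i)%nat; [apply Rdiv_nonneg, pow_b_pos | apply Tb_range]; assumption.
  - rewrite (bfrac_at_indep b Hb L) in Hfrac by lra. exact Hfrac.
Qed.

(* [bint_part b y i] is the beta-integer with expansion [ys (L-1) ... ys i]. *)
Definition bint_part b y i := y / b ^ i - bfrac b (y / b ^ i).

Section Expansion.

Variables (y : R) (L : nat) (ys : nat -> nat).
Hypothesis HE : beta_int_expansion b y L ys.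

Lemma expansion_range : 0 <= y < b ^ L.
Proof.
  destruct HE as [[-> ->] | [_ [[Hlo Hhi] _]]]; [simpl; lra|].
  pose proof (pow_b_pos b Hb (L - 1)). lra.
Qed.

Lemma expansion_bfrac : bfrac b y = 0.
Proof.
  destruct HE as [[_ ->] | [_ [_ [_ Hint]]]]; [apply bfrac_small; lra|].
  rewrite (bfrac_at_indep b Hb L) by exact expansion_range. exact Hint.
Qed.

Lemma expansion_digit i : (i < L)%nat ->
  Int_part (b * bfrac b (y / b ^ S i)) = Z.of_nat (ys i).
Proof.
  intros Hi. destruct HE as [[-> _] | [_ [_ [Hdig _]]]]; [lia|].
  rewrite Hdig by exact Hi. do 2 f_equal.
  pose proof (pow_b_pos b Hb (L - 1 - i)). pose proof (pow_b_pos b Hb (S i)).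
  pose proof expansion_range.
  assert (Hpow : b ^ L = b ^ (L - 1 - i) * b ^ S i) by (rewrite <- pow_add; f_equal; lia).
  rewrite (bfrac_at_indep b Hb (L - 1 - i)).
  - unfold bfrac_at. f_equal. rewrite Hpow. field. lra.
  - split; [apply Rdiv_nonneg; lra|]. apply Rdiv_lt_of_lt_mul; [lra|].
    rewrite <- Hpow. lra.
Qed.


Lemma bint_part_L : bint_part b y L = 0.
Proof.
  pose proof expansion_range. pose proof (pow_b_pos b Hb L).
  unfold bint_part. rewrite (bfrac_small b Hb); [ring|].
  split; [apply Rdiv_nonneg | apply Rdiv_lt_of_lt_mul]; lra.
Qed.

Lemma bint_part_0 : bint_part b y 0 = y.
Proof. unfold bint_part. simpl. rewrite Rdiv_1_r, expansion_bfrac. ring. Qed.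

Lemma div_pow_nonneg i : 0 <= y / b ^ i.
Proof. apply Rdiv_nonneg; [apply expansion_range | apply pow_b_pos, Hb]. Qed.

Lemma bint_part_nonneg i : 0 <= bint_part b y i.
Proof. unfold bint_part. pose proof (bfrac_le b Hb _ (div_pow_nonneg i)). lra. Qed.

Lemma bint_part_succ i : (i < L)%nat ->
  bint_part b y i = b * bint_part b y (S i) + INR (ys i).
Proof.
  intros Hi. pose proof (pow_b_pos b Hb i).
  assert (Hdiv : y / b ^ i / b = y / b ^ S i) by (simpl; field; lra).
  unfold bint_part. rewrite (bfrac_div b Hb (y / b ^ i)), Hdiv by apply div_pow_nonneg.
  unfold Tb. rewrite expansion_digit, <- INR_IZR_INZ by exact Hi.
  simpl. field. lra.
Qed.

Lemma digit_lt_gap i g : (i < L)%nat -> 0 < g ->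
  gap_after b (bint_part b y (S i)) g -> INR (ys i) < b * g.
Proof.
  intros Hi Hg [_ Hend]. set (f := bfrac b (y / b ^ S i)).
  assert (Hfg : f < g).
  { destruct (Rlt_le_dec f g) as [|Hge]; [assumption|]. exfalso.
    pose proof (bfrac_sub b Hb (y / b ^ S i) (f - g) (div_pow_nonneg (S i))) as Hsub.
    unfold bint_part in Hend. fold f in Hsub, Hend.
    replace (y / b ^ S i - f + g) with (y / b ^ S i - (f - g)) in Hend by ring.
    rewrite Hsub in Hend by lra. lra. }
  destruct (base_Int_part (b * f)) as [Hfl _].
  unfold f in Hfl. rewrite expansion_digit in Hfl by exact Hi. fold f in Hfl.
  rewrite INR_IZR_INZ. nra.
Qed.

End Expansion.

Lemma in_Zbeta_plus_bfrac x : in_Zbeta_plus b x -> 0 <= x /\ bfrac b x = 0.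
Proof.
  intros [L [ys HE]]. split; [apply (expansion_range x L ys HE) | apply (expansion_bfrac x L ys HE)].
Qed.

Lemma succ_of_gap y g : 0 <= y -> 0 < g -> gap_after b y g -> is_succ b y (y + g).
Proof.
  intros Hy Hg [Hinside Hend]. split; [|split].
  - left. apply in_Zbeta_plus_of_bfrac; [lra | exact Hend].
  - lra.
  - intros z [Hz|Hz] Hyz; destruct (Rlt_le_dec z (y + g)) as [Hlt|]; try assumption; exfalso.
    + apply in_Zbeta_plus_bfrac in Hz as [_ Hz].
      specialize (Hinside (z - y) ltac:(lra)).
      replace (y + (z - y)) with z in Hinside by ring. lra.
    + apply in_Zbeta_plus_bfrac in Hz as [Hz _]. lra.
Qed.

End BetaIntegers.

Section RenyiExpansionOfOne.

Variables (b : R) (m : nat) (t : nat -> nat).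
Hypotheses (Hb : 1 < b) (Hm : (2 <= m)%nat) (HR : renyi_one b m t) (Htm : t m = 1%nat).

Lemma orbit1_digit j : (j < m)%nat -> Int_part (b * orbit1 b j) = Z.of_nat (t (S j)).
Proof.
  intros Hj. destruct HR as [Hdig _]. rewrite Hdig by lia.
  replace (S j - 1)%nat with j by lia. reflexivity.
Qed.

Lemma orbit1_step j : (j < m)%nat -> b * orbit1 b j = INR (t (S j)) + orbit1 b (S j).
Proof.
  intros Hj. rewrite Nat.iter_succ. unfold Tb.
  rewrite orbit1_digit, INR_IZR_INZ by exact Hj. ring.
Qed.

Lemma orbit1_m : orbit1 b m = 0.
Proof. exact (proj2 HR). Qed.

Lemma orbit1_pred_m : b * orbit1 b (m - 1) = 1.
Proof.
  rewrite orbit1_step by lia. replace (S (m - 1)) with m by lia.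
  rewrite orbit1_m, Htm. simpl. ring.
Qed.

Lemma orbit1_pos j : (j < m)%nat -> 0 < orbit1 b j.
Proof.
  intros Hj. destruct j as [|j]; [simpl; lra|].
  destruct (orbit1_range b (S j) ltac:(lia)) as [Hge _].
  destruct (Rle_lt_or_eq_dec _ _ Hge) as [|Hzero]; [assumption|]. exfalso.
  assert (Hlast : orbit1 b (m - 1) = 0).
  { replace (m - 1)%nat with (m - 1 - S j + S j)%nat by lia.
    rewrite Nat.iter_add, <- Hzero. apply iter_Tb_0. }
  pose proof orbit1_pred_m. rewrite Hlast in *. lra.
Qed.

(* The digits of [orbit1 b r] are [t (r + 1) ... t m], those of [1] are [t 1 ... t m]. *)
Lemma dstar_shifts_lex_le : shifts_lex_le (dstar m t).
Proof.
  intros n i Hn Hagree.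
  rewrite dstar_add_mod. setoid_rewrite dstar_add_mod in Hagree.
  set (r := (n mod m)%nat) in *.
  assert (Hr : (r < m)%nat) by (apply Nat.mod_upper_bound; lia).
  destruct (Nat.eq_dec r 0) as [Hr0|Hr0]; [rewrite Hr0; apply Nat.le_refl|].
  assert (Hlex : forall J, (J <= i)%nat -> (r + J < m)%nat -> (t (r + J + 1) <= t (J + 1))%nat).
  { intros J HJi HJm.
    assert (Hdig : forall l, (r + l < m)%nat ->
      Int_part (b * Nat.iter l (Tb b) (orbit1 b r)) = Z.of_nat (t (r + l + 1)%nat)
      /\ Int_part (b * Nat.iter l (Tb b) 1) = Z.of_nat (t (l + 1)%nat)).
    { intros l Hl. rewrite <- Nat.iter_add, !orbit1_digit by lia.
      split; do 2 f_equal; lia. }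
    pose proof (greedy_digit_le b J (orbit1 b r) 1 ltac:(lra)) as Hmono.
    apply Nat2Z.inj_le. destruct (Hdig J HJm) as [<- <-]. apply Hmono.
    - destruct (orbit1_range b r ltac:(lia)). lra.
    - intros l Hl. destruct (Hdig l ltac:(lia)) as [-> ->]. f_equal.
      specialize (Hagree (l + 1)%nat ltac:(lia)).
      rewrite !dstar_lt in Hagree by lia.
      replace (r + l + 1)%nat with (r + (l + 1))%nat by lia. exact Hagree. }
  destruct (le_lt_dec (m - r) i) as [Hi|Hi].
  - exfalso. specialize (Hlex (m - r - 1)%nat ltac:(lia) ltac:(lia)).
    replace (r + (m - r - 1) + 1)%nat with m in Hlex by lia.
    specialize (Hagree (m - r)%nat ltac:(lia)).
    replace (r + (m - r))%nat with m in Hagree by lia.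
    rewrite dstar_m, dstar_lt in Hagree by lia.
    replace (m - r - 1 + 1)%nat with (m - r)%nat in Hlex by lia. lia.
  - destruct (Nat.eq_dec (r + S i) m) as [->|Hne]; [rewrite dstar_m; lia|].
    rewrite !dstar_lt by lia. specialize (Hlex i ltac:(lia) ltac:(lia)).
    replace (r + S i)%nat with (r + i + 1)%nat by lia.
    replace (S i) with (i + 1)%nat by lia. exact Hlex.
Qed.


Lemma succ_mod_lt K : (S (K mod m) < m)%nat -> (S K mod m = S (K mod m))%nat.
Proof.
  intros Hlt. pose proof (Nat.div_mod K m ltac:(lia)).
  symmetry. apply (Nat.mod_unique _ _ (K / m)); lia.
Qed.

Lemma succ_mod_eq K : (S (K mod m) = m)%nat -> (S K mod m = 0)%nat.
Proof.
  intros Heq. pose proof (Nat.div_mod K m ltac:(lia)).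
  symmetry. apply (Nat.mod_unique _ _ (S (K / m))); nia.
Qed.

Lemma dstar_succ_lt K : (S (K mod m) < m)%nat -> dstar m t (S K) = t (S (K mod m)).
Proof. intros Hlt. unfold dstar. rewrite succ_mod_lt by exact Hlt. reflexivity. Qed.

Lemma dstar_succ_eq K : (S (K mod m) = m)%nat -> dstar m t (S K) = 0%nat.
Proof. intros Heq. unfold dstar. rewrite succ_mod_eq by exact Heq. reflexivity. Qed.

Lemma mod_m_lt K : (K mod m < m)%nat.
Proof. apply Nat.mod_upper_bound. lia. Qed.

Lemma digit_le_dstar K a : INR a < b * orbit1 b (K mod m) -> (a <= dstar m t (S K))%nat.
Proof.
  intros Ha. rewrite orbit1_step in Ha by apply mod_m_lt.
  destruct (Nat.eq_dec (S (K mod m)) m) as [Heq|Hne].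
  - rewrite dstar_succ_eq by exact Heq. rewrite Heq, orbit1_m, Htm, Rplus_0_r in Ha.
    apply INR_lt in Ha. lia.
  - rewrite dstar_succ_lt by (pose proof (mod_m_lt K); lia).
    pose proof (orbit1_range b (S (K mod m)) ltac:(lia)).
    assert (Hlt : INR a < INR (S (t (S (K mod m))))) by (rewrite S_INR; lra).
    apply INR_lt in Hlt. lia.
Qed.

Lemma gap_after_step_match Y K : 0 <= Y -> gap_after b Y (orbit1 b (K mod m)) ->
  gap_after b (b * Y + INR (dstar m t (S K))) (orbit1 b (S K mod m)).
Proof.
  intros HY Hgap. pose proof (mod_m_lt K) as Hj.
  pose proof (orbit1_step (K mod m) Hj) as Hstep.
  destruct (Nat.eq_dec (S (K mod m)) m) as [Heq|Hne].
  - rewrite dstar_succ_eq, succ_mod_eq by exact Heq.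
    apply (gap_after_scale_one b Hb Y _ _ HY Hgap).
    rewrite Heq, orbit1_m, Htm in Hstep. simpl in *. lra.
  - rewrite dstar_succ_lt, succ_mod_lt by lia.
    apply (gap_after_scale_fraction b Hb Y _ _ HY Hgap); [exact Hstep|].
    split; [apply orbit1_pos | apply orbit1_range]; lia.
Qed.

Lemma gap_after_step_below Y K a : 0 <= Y -> gap_after b Y (orbit1 b (K mod m)) ->
  (a < dstar m t (S K))%nat -> gap_after b (b * Y + INR a) 1.
Proof.
  intros HY Hgap Ha. pose proof (mod_m_lt K) as Hj.
  destruct (Nat.eq_dec (S (K mod m)) m) as [Heq|Hne].
  { rewrite dstar_succ_eq in Ha by exact Heq. lia. }
  rewrite dstar_succ_lt in Ha by lia.
  apply (gap_after_scale_one b Hb Y _ _ HY Hgap).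
  rewrite orbit1_step by exact Hj.
  pose proof (orbit1_range b (S (K mod m)) ltac:(lia)).
  apply le_INR in Ha. rewrite S_INR in Ha. lra.
Qed.

Section Successor.

Variables (y : R) (L : nat) (ys : nat -> nat).
Hypothesis HE : beta_int_expansion b y L ys.

Lemma gap_after_bint_part d : forall i K, (i + d = L)%nat ->
  longest_match (dstar m t) (fun n => ys (i + n)%nat) d K ->
  gap_after b (bint_part b y i) (orbit1 b (K mod m)).
Proof.
  induction d as [|d IH]; intros i K Hid HK.
  - replace i with L by lia. destruct HK as [HK0 _]. replace K with 0%nat by lia.
    rewrite Nat.Div0.mod_0_l, (bint_part_L b Hb y L ys HE). apply gap_after_0_1, Hb.
  - assert (Htail : forall n, ys (S i + n)%nat = ys (i + S n)%nat) by (intros; f_equal; lia).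
    destruct (longest_match_exists (dstar m t) (fun n => ys (S i + n)%nat) d) as [K1 HK1].
    pose proof (IH (S i) K1 ltac:(lia) HK1) as Hgap.
    pose proof (bint_part_nonneg b Hb y L ys HE (S i)) as HY.
    rewrite (bint_part_succ b Hb y L ys HE i) by lia.
    assert (Hle : (ys i <= dstar m t (S K1))%nat).
    { apply digit_le_dstar, (digit_lt_gap b Hb y L ys HE i _ ltac:(lia)); [|exact Hgap].
      apply orbit1_pos, mod_m_lt. }
    destruct (Nat.eq_dec (ys i) (dstar m t (S K1))) as [Heq|Hne].
    + pose proof (longest_match_extend _ (fun n => ys (i + n)%nat) _ Htail d K1 HK1) as HK'.
      rewrite (longest_match_unique _ _ _ _ _ HK (HK' ltac:(cbv beta; rewrite Nat.add_0_r; exact Heq))).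
      rewrite Heq. exact (gap_after_step_match _ K1 HY Hgap).
    + assert (Hlt : (ys i < dstar m t (S K1))%nat) by lia.
      pose proof (longest_match_reset _ (fun n => ys (i + n)%nat) _ Htail dstar_shifts_lex_le
        d K1 HK1) as HK'.
      rewrite (longest_match_unique _ _ _ _ _ HK (HK' ltac:(cbv beta; rewrite Nat.add_0_r; exact Hlt))).
      rewrite Nat.Div0.mod_0_l. exact (gap_after_step_below _ K1 _ HY Hgap Hlt).
Qed.

End Successor.

End RenyiExpansionOfOne.

Theorem mainTheorem16 (beta : R) (m : nat) (t : nat -> nat)
  (y : R) (L : nat) (ys : nat -> nat) (k : nat) :
  1 < beta ->
  (2 <= m)%nat ->
  renyi_one beta m t ->
  (1 <= t 1%nat)%nat ->
  t m = 1%nat ->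
  beta_int_expansion beta y L ys ->
  (k <= L)%nat ->
  suffix_is_dstar_prefix m t ys k ->
  (forall k2 : nat, (k2 <= L)%nat -> suffix_is_dstar_prefix m t ys k2 -> (k2 <= k)%nat) ->
  is_succ beta y (y + Nat.iter (Nat.modulo k m) (Tb beta) 1).
Proof.
  intros Hb Hm HR _ Htm HE HkL Hsuf Hmax.
  assert (Hk : longest_match (dstar m t) (fun n => ys (0 + n)%nat) L k)
    by (split; [exact HkL | split; assumption]).
  pose proof (gap_after_bint_part beta m t Hb Hm HR Htm y L ys HE L 0 k eq_refl Hk) as Hgap.
  rewrite (bint_part_0 beta Hb y L ys HE) in Hgap.
  apply succ_of_gap; [exact Hb | apply (expansion_range beta Hb y L ys HE) | | exact Hgap].
  apply (orbit1_pos beta m t Hm HR Htm), Nat.mod_upper_bound. lia.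
Qed.
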